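(* Let $P$ be a product rule. The $P$-product $*$ on $\mathbb Q\langle\langle\Sigma\rangle\rangle$ is bilinear, associative and commutative (BAC) if and only if $P$ is special, i.e. if and only if the following identities hold (where $\approx$ is term equivalence): \[ P(x+y,\dot x+\dot y,z,\dot z)\approx P(x,\dot x,z,\dot z)+P(y,\dot y,z,\dot z),\] \[ P(x,\dot x,\,y*z,\,P(y,\dot y,z,\dot z))\approx P(x*y,\,P(x,\dot x,y,\dot y),\,z,\dot z),\] \[ P(x,\dot x,y,\dot y)\approx P(y,\dot y,x,\dot x).\]
   Context: Let $\Sigma$ be a finite alphabet, $\Sigma^*$ the set of finite words with empty word $\varepsilon$. A series is a function $f:\Sigma^*\to\mathbb Q$; write $f_w=f(w)$; the set of series $\mathbb Q\langle\langle\Sigma\rangle\rangle$ is a $\mathbb Q$-vector space under pointwise scalar multiplication and addition, with zero series $\mathbb 0$. For $a\in\Sigma$ the left derivative $\delta_a f$ is the series $w\mapsto f(aw)$. Terms: for a set $X$ of variables, $\mathrm{Terms}(X)$ is the set of syntactic terms generated by $u,v::=x\mid 0\mid c\cdot u\mid u+v\mid u*v$ ($x\in X$, $c\in\mathbb Q$), with no identities imposed. A product rule is a term $P\in\mathrm{Terms}(\{x,\dot x,y,\dot y\})$; $P(s_1,s_2,s_3,s_4)$ denotes simultaneous substitution of $s_1,\dots,s_4$ for $x,\dot x,y,\dot y$. $P$-product: given a product rule $P$, the $P$-product $*$ on series and the semantics $[\![u]\!]_\varrho\in\mathbb Q\langle\langle\Sigma\rangle\rangle$ of terms $u$ under valuations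 $\varrho:X\to\mathbb Q\langle\langle\Sigma\rangle\rangle$ are the unique pair satisfying: $(f*g)_\varepsilon=f_\varepsilon g_\varepsilon$ and $\delta_a(f*g)=[\![P]\!]_{[x\mapsto f,\dot x\mapsto\delta_af,y\mapsto g,\dot y\mapsto\delta_ag]}$ for all $a\in\Sigma$ and series $f,g$; and $[\![0]\!]_\varrho=\mathbb 0$, $[\![x]\!]_\varrho=\varrho(x)$, $[\![c\cdot u]\!]_\varrho=c\cdot[\![u]\!]_\varrho$, $[\![u+v]\!]_\varrho=[\![u]\!]_\varrho+[\![v]\!]_\varrho$, $[\![u*v]\!]_\varrho=[\![u]\!]_\varrho*[\![v]\!]_\varrho$. BAC: the product is BAC if for all series $f,g,h$ and $c\in\mathbb Q$: $(f+g)*h=f*h+g*h$, $(c\cdot f)*g=c\cdot(f*g)$, $f*(g*h)=(f*g)*h$, $f*g=g*f$. Term equivalence: $u\approx v$ iff $u$ and $v$ denote the same polynomial of the commutative polynomial ring $\mathbb Q[X]$ when $0,c\cdot,+,*$ are read as the zero polynomial, scalar multiplication, addition and multiplication of polynomials (equivalently, $\approx$ is the smallest congruence on terms generated by the axioms of commutative, not necessarily unital, $\mathbb Q$-algebras). *)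

From HB Require Import structures.
From mathcomp Require Import all_boot all_order all_algebra.
From mathcomp Require Import mpoly.
Set Implicit Arguments. Unset Strict Implicit. Unset Printing Implicit Defensive.
Import Order.TTheory GRing.Theory Num.Theory.
Local Open Scope ring_scope.

Definition word (S : finType) := seq S.
Definition series (S : finType) := seq S -> rat.

Definition szero (S : finType) : series S := fun _ => 0.
Definition sadd (S : finType) (f g : series S) : series S := fun w => f w + g w.
Definition sscale (S : finType) (c : rat) (f : series S) : series S := fun w => c * f w.
Definition sderiv (S : finType) (a : S) (f : series S) : series S := fun w => f (a :: w).

Inductive term (X : Type) : Type :=
| TVar of X
| TZero
| TScale of rat & term X
| TAdd of term X & term X
| TMul of term X & term X.
Arguments TZero {X}.

Fixpoint tsubst (X Y : Type) (s : X -> term Y) (u : term X) : term Y :=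
  match u with
  | TVar x => s x
  | TZero => TZero
  | TScale c u => TScale c (tsubst s u)
  | TAdd u v => TAdd (tsubst s u) (tsubst s v)
  | TMul u v => TMul (tsubst s u) (tsubst s v)
  end.

(* A product rule is a term in the four variables x, x', y, y',
   encoded as 'I_4 with 0 = x, 1 = xdot, 2 = y, 3 = ydot. *)
Definition prod_rule := term 'I_4.

Definition subst4 (Y : Type) (s1 s2 s3 s4 : term Y) : 'I_4 -> term Y :=
  fun i => match nat_of_ord i with 0 => s1 | 1 => s2 | 2 => s3 | _ => s4 end.
Definition papp (Y : Type) (P : prod_rule) (s1 s2 s3 s4 : term Y) : term Y :=
  tsubst (subst4 s1 s2 s3 s4) P.

Fixpoint tsem (S : finType) (X : Type) (m : series S -> series S -> series S)
    (rho : X -> series S) (u : term X) : series S :=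
  match u with
  | TVar x => rho x
  | TZero => @szero S
  | TScale c u => sscale c (tsem m rho u)
  | TAdd u v => sadd (tsem m rho u) (tsem m rho v)
  | TMul u v => m (tsem m rho u) (tsem m rho v)
  end.

Definition pval (S : finType) (f g : series S) (a : S) : 'I_4 -> series S :=
  fun i => match nat_of_ord i with
           | 0 => f | 1 => sderiv a f | 2 => g | _ => sderiv a g end.

(* ---------- The P-product ----------
   pprod_approx P n is correct on all words of length < n; the P-product
   (f*g)(w) is read off at n = size w + 1.  This is the unique solution of
     (f*g)_eps = f_eps g_eps,
     delta_a (f*g) = [[P]]_[x|->f, xdot|->delta_a f, y|->g, ydot|->delta_a g]
   (recursion on the length of the word). *)
Fixpoint pprod_approx (S : finType) (P : prod_rule) (n : nat)
    : series S -> series S -> series S :=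
  match n with
  | 0 => fun _ _ _ => 0
  | n'.+1 => fun f g w =>
      match w with
      | [::] => f [::] * g [::]
      | a :: w' => tsem (pprod_approx P n') (pval f g a) P w'
      end
  end.

Definition pprod (S : finType) (P : prod_rule) (f g : series S) : series S :=
  fun w => pprod_approx P (size w).+1 f g w.

Definition is_P_product (S : finType) (P : prod_rule)
    (m : series S -> series S -> series S) : Prop :=
  (forall f g, m f g [::] = f [::] * g [::]) /\
  (forall a f g, sderiv a (m f g) = tsem m (pval f g a) P).

Definition BAC (S : finType) (m : series S -> series S -> series S) : Prop :=
  (forall f g h, m (sadd f g) h = sadd (m f h) (m g h)) /\
  (forall (c : rat) f g, m (sscale c f) g = sscale c (m f g)) /\
  (forall f g h, m f (m g h) = m (m f g) h) /\
  (forall f g, m f g = m g f).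

Fixpoint tpoly (n : nat) (u : term 'I_n) : {mpoly rat[n]} :=
  match u with
  | TVar i => 'X_i
  | TZero => 0
  | TScale c u => c *: tpoly u
  | TAdd u v => tpoly u + tpoly v
  | TMul u v => tpoly u * tpoly v
  end.

Definition term_equiv (n : nat) (u v : term 'I_n) : Prop := tpoly u = tpoly v.

(* ---------- Special product rules ----------
   Six variables x, xdot, y, ydot, z, zdot encoded as 'I_6 (0..5). *)
Definition v6 (k : nat) : term 'I_6 := TVar (inord k).

Definition special (P : prod_rule) : Prop :=
  let x := v6 0 in let dx := v6 1 in let y := v6 2 in
  let dy := v6 3 in let z := v6 4 in let dz := v6 5 in
  [/\ term_equiv (papp P (TAdd x y) (TAdd dx dy) z dz)
                 (TAdd (papp P x dx z dz) (papp P y dy z dz)),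
      term_equiv (papp P x dx (TMul y z) (papp P y dy z dz))
                 (papp P (TMul x y) (papp P x dx y dy) z dz)
    & term_equiv (papp P x dx y dy) (papp P y dy x dx)].

(* The P-product is determined by its constant term and its left derivatives,
   so the BAC laws can be checked word length by word length.

   If the P-product is BAC, the value at the empty word of the semantics of a
   term is its polynomial evaluated at the constant terms of the valuation.
   Series whose constant term and whose derivatives' constant terms are
   arbitrary rationals show that the two sides of each special identity,
   which evaluate to the derivatives of the two sides of a BAC law, are the
   same polynomial function on Q^6, hence the same polynomial.

   Conversely, let P be special and the BAC laws hold on words of length < n.
   The product truncated to such words is then commutative, associative and
   bilinear (homogeneity over Q follows from additivity); after adjoining a
   unit, the semantics of a term is the evaluation of its polynomial, so
   equivalent terms agree on words of length < n.  The special identities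
   then give the BAC laws on words of length n. *)

From HB Require Import structures.
From mathcomp Require Import all_boot all_order all_algebra.
From mathcomp Require Import mpoly.
From Stdlib Require Import FunctionalExtensionality.
Set Implicit Arguments. Unset Strict Implicit. Unset Printing Implicit Defensive.
Import Order.TTheory GRing.Theory Num.Theory.
Local Open Scope ring_scope.

Section PProduct.
Variable S : finType.
Implicit Types (f g h : series S) (m : series S -> series S -> series S).

Definition eq_upto (k : nat) f g := forall w : seq S, (size w < k)%N -> f w = g w.

Lemma eq_upto_sym k f g : eq_upto k f g -> eq_upto k g f.
Proof. by move=> H w hw; rewrite H. Qed.

Lemma eq_upto_le k l f g : (l <= k)%N -> eq_upto k f g -> eq_upto l f g.
Proof. by move=> hl H w hw; apply: H; apply: leq_trans hl. Qed.

Lemma eq_uptoS k f g : f [::] = g [::] ->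
  (forall a, eq_upto k (sderiv a f) (sderiv a g)) -> eq_upto k.+1 f g.
Proof. by move=> H0 Ha [|a w] hw //; apply: Ha. Qed.

Lemma tsem_eq_upto m1 m2 k
    (Hm : forall f f' g g', eq_upto k f f' -> eq_upto k g g' ->
      eq_upto k (m1 f g) (m2 f' g'))
    (X : Type) (r1 r2 : X -> series S) (Hr : forall i, eq_upto k (r1 i) (r2 i)) u :
  eq_upto k (tsem m1 r1 u) (tsem m2 r2 u).
Proof.
elim: u => [x||c u IH|u IHu v IHv|u IHu v IHv] /=.
- exact: Hr.
- by [].
- by move=> w hw; rewrite /sscale IH.
- by move=> w hw; rewrite /sadd IHu ?IHv.
- exact: Hm.
Qed.

Lemma tsem_tsubst m (X Y : Type) (s : X -> term Y) (rho : Y -> series S) u :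
  tsem m rho (tsubst s u) = tsem m (fun x => tsem m rho (s x)) u.
Proof. by elim: u => //= [c u ->|u -> v ->|u -> v ->]. Qed.

Variable P : prod_rule.

Lemma pval_eq_upto k f f' g g' a : eq_upto k.+1 f f' -> eq_upto k.+1 g g' ->
  forall i, eq_upto k (pval f g a i) (pval f' g' a i).
Proof.
move=> Hf Hg i w hw; rewrite /pval /sderiv.
by case: (nat_of_ord i) => [|[|[|j]]]; [apply: Hf|apply: Hf|apply: Hg|apply: Hg];
  rewrite //= ltnW.
Qed.

Lemma pprod_approx_eq_upto k n1 n2 f f' g g' :
  eq_upto k f f' -> eq_upto k g g' -> (k <= n1)%N -> (k <= n2)%N ->
  eq_upto k (pprod_approx P n1 f g) (pprod_approx P n2 f' g').
Proof.
elim: k n1 n2 f f' g g' => [|k IH] [|n1] [|n2] f f' g g' Hf Hg // h1 h2 w.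
case: w => [|a w] hw /=; first by rewrite Hf ?Hg.
apply: (tsem_eq_upto (k := k)) => //; last exact: pval_eq_upto.
by move=> *; apply: IH.
Qed.

Lemma pprod_eq_upto k f f' g g' : eq_upto k f f' -> eq_upto k g g' ->
  eq_upto k (pprod P f g) (pprod P f' g').
Proof.
move=> Hf Hg w hw.
by apply: (pprod_approx_eq_upto (k := (size w).+1)) => //; apply: eq_upto_le hw _.
Qed.

Lemma pprod_nil f g : pprod P f g [::] = f [::] * g [::].
Proof. by []. Qed.

Lemma pprod_is_P_product : is_P_product P (pprod (S := S) P).
Proof.
split=> // a f g; apply: functional_extensionality => w.
apply: (tsem_eq_upto (k := (size w).+1)) => // f1 f1' g1 g1' H1 H2 v hv.
exact: (pprod_approx_eq_upto (eq_upto_le hv H1) (eq_upto_le hv H2) hv).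
Qed.

Lemma tsem_papp (X : Type) (rho : X -> series S) s1 s2 s3 s4 a f g :
  tsem (pprod P) rho s1 = f -> tsem (pprod P) rho s2 = sderiv a f ->
  tsem (pprod P) rho s3 = g -> tsem (pprod P) rho s4 = sderiv a g ->
  tsem (pprod P) rho (papp P s1 s2 s3 s4) = sderiv a (pprod P f g).
Proof.
move=> H1 H2 H3 H4; rewrite (proj2 pprod_is_P_product) /papp tsem_tsubst.
by congr tsem; apply: functional_extensionality => -[[|[|[|[|i]]]] hi].
Qed.

End PProduct.

Section SpecialIdentities.
Variables (S : finType) (P : prod_rule) (a : S) (f g h : series S).

Definition pval6 : 'I_6 -> series S := fun i =>
  match nat_of_ord i with
  | 0 => f | 1 => sderiv a f | 2 => g | 3 => sderiv a g | 4 => h | _ => sderiv a h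
  end.

Local Notation sem := (tsem (pprod P) pval6).
Local Notation x := (v6 0).
Local Notation dx := (v6 1).
Local Notation y := (v6 2).
Local Notation dy := (v6 3).
Local Notation z := (v6 4).
Local Notation dz := (v6 5).

Lemma sem_papp_xy : sem (papp P x dx y dy) = sderiv a (pprod P f g).
Proof. by apply: tsem_papp; rewrite /= /pval6 ?inordK. Qed.

Lemma sem_papp_yx : sem (papp P y dy x dx) = sderiv a (pprod P g f).
Proof. by apply: tsem_papp; rewrite /= /pval6 ?inordK. Qed.

Lemma sem_papp_xz : sem (papp P x dx z dz) = sderiv a (pprod P f h).
Proof. by apply: tsem_papp; rewrite /= /pval6 ?inordK. Qed.

Lemma sem_papp_yz : sem (papp P y dy z dz) = sderiv a (pprod P g h).
Proof. by apply: tsem_papp; rewrite /= /pval6 ?inordK. Qed.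

Lemma sem_papp_add : sem (papp P (TAdd x y) (TAdd dx dy) z dz) =
  sderiv a (pprod P (sadd f g) h).
Proof. by apply: tsem_papp; rewrite /= /pval6 ?inordK. Qed.

Lemma sem_add_papp : sem (TAdd (papp P x dx z dz) (papp P y dy z dz)) =
  sderiv a (sadd (pprod P f h) (pprod P g h)).
Proof. by rewrite /= sem_papp_xz sem_papp_yz. Qed.

Lemma sem_papp_mul_left : sem (papp P (TMul x y) (papp P x dx y dy) z dz) =
  sderiv a (pprod P (pprod P f g) h).
Proof. by apply: (tsem_papp _ sem_papp_xy); rewrite /= /pval6 ?inordK. Qed.

Lemma sem_papp_mul_right : sem (papp P x dx (TMul y z) (papp P y dy z dz)) =
  sderiv a (pprod P f (pprod P g h)).
Proof. by apply: (tsem_papp _ _ _ sem_papp_yz); rewrite /= /pval6 ?inordK. Qed.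

End SpecialIdentities.

Lemma digits_inj (D k : nat) (a b : 'I_k -> nat) :
  (forall i, a i < D)%N -> (forall i, b i < D)%N ->
  (\sum_(i < k) a i * D ^ i = \sum_(i < k) b i * D ^ i)%N -> a =1 b.
Proof.
elim: k a b => [|k IH] a b ha hb E i; first by case: i.
have expand (c : 'I_k.+1 -> nat) : (\sum_(i < k.+1) c i * D ^ i =
    c ord0 + (\sum_(i < k) c (lift ord0 i) * D ^ i) * D)%N.
  rewrite big_ord_recl expn0 muln1 big_distrl /=; congr (_ + _)%N.
  by apply: eq_bigr => j _; rewrite expnSr mulnA.
move: E; rewrite !expand [(a _ + _)%N]addnC [(b _ + _)%N]addnC => E.
have [D_gt0 E0] : (0 < D)%N /\ a ord0 = b ord0.
  split; first exact: leq_ltn_trans (ha ord0).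
  by have := congr1 (modn^~ D) E; rewrite !modnMDl !modn_small.
case: (unliftP ord0 i) => [j ->|-> //].
apply: (IH (fun j => a (lift ord0 j)) (fun j => b (lift ord0 j))) => //.
by have := congr1 (divn^~ D) E; rewrite !divnMDl // !divn_small // !addn0.
Qed.

Lemma mpoly_eq0_meval (R : numDomainType) k (p : {mpoly R[k]}) :
  (forall v, p.@[v] = 0) -> p = 0.
Proof.
move=> p0; pose D := msize p.
have digit_lt m i : m \in msupp p -> (m i < D)%N.
  move=> hm; apply: leq_ltn_trans (msize_mdeg_lt hm).
  by rewrite mdegE (bigD1 i) //= leq_addr.
(* Kronecker substitution: X_i |-> t ^+ D ^ i sends the monomials of p to
   pairwise distinct powers of t. *)
pose enc (m : 'X_{1..k}) := (\sum_(i < k) m i * D ^ i)%N.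
have enc_inj : {in msupp p &, injective enc}.
  move=> m m' hm hm' E; apply/mnmP.
  by apply: (digits_inj (D := D)) E => i; apply: digit_lt.
pose Q : {poly R} := \sum_(m <- msupp p) p@_m *: 'X^(enc m).
have Q0 : Q = 0.
  apply/eqP/negPn/negP => nzQ.
  have := max_poly_roots nzQ (rs := [seq j%:R | j <- iota 0 (size Q)]).
  rewrite size_map size_iota ltnn => contra; suff: false by []; apply: contra.
    apply/allP => _ /mapP [j _ ->]; apply/eqP.
    rewrite -[RHS](p0 (fun i => j%:R ^+ (D ^ i))) mevalE horner_sum.
    apply: eq_bigr => m _.
    rewrite hornerZ hornerXn (big_morph (fun n => j%:R ^+ n) (exprD _) (expr0 _)).
    by congr (_ * _); apply: eq_bigr => i _; rewrite -exprM mulnC.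
  by rewrite map_inj_uniq ?iota_uniq // => x y /eqP; rewrite eqr_nat => /eqP.
apply/mpolyP => m; rewrite mcoeff0.
have [hm|/memN_msupp_eq0 //] := boolP (m \in msupp p).
have := congr1 (fun q : {poly R} => q`_(enc m)) Q0.
rewrite coef0 /Q coef_sum (bigD1_seq m) ?msupp_uniq //= coefZ coefXn eqxx mulr1.
rewrite big1_seq ?addr0 // => m' /andP [m'_neq hm'].
by rewrite coefZ coefXn (inj_in_eq enc_inj) // eq_sym (negbTE m'_neq) mulr0.
Qed.

Definition two_valued (S : finType) (r0 r1 : rat) : series S :=
  fun w => if w is _ :: _ then r1 else r0.

Section BACSpecial.
Variables (S : finType) (P : prod_rule).

Lemma tsem_nil k (rho : 'I_k -> series S) u :
  tsem (pprod P) rho u [::] = (tpoly u).@[fun i => rho i [::]].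
Proof.
elim: u => /= [i||c u IH|u IHu v IHv|u IHu v IHv].
- by rewrite mevalXU.
- by rewrite meval0.
- by rewrite /sscale mevalZ IH.
- by rewrite /sadd mevalD IHu IHv.
- by rewrite mevalM -IHu -IHv.
Qed.

Lemma term_equiv_of_pval6 (a : S) (L R : term 'I_6) :
  (forall f g h : series S,
    tsem (pprod P) (pval6 a f g h) L [::] = tsem (pprod P) (pval6 a f g h) R [::]) ->
  term_equiv L R.
Proof.
move=> E; apply/eqP; rewrite -subr_eq0; apply/eqP/mpoly_eq0_meval => r.
pose s k := two_valued (S := S) (r (inord k)) (r (inord k.+1)).
have hr : (fun i => pval6 a (s 0%N) (s 2%N) (s 4%N) i [::]) =1 r.
  move=> -[[|[|[|[|[|[|i]]]]]] hi] //=;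
  by congr r; apply: val_inj; rewrite /= inordK.
by rewrite mevalB -!(meval_eq _ hr) -!tsem_nil E subrr.
Qed.

Lemma bac_special (a : S) : BAC (pprod (S := S) P) -> special P.
Proof.
case=> [Hadd [_ [Hass Hcom]]]; split; apply: (term_equiv_of_pval6 (a := a)) => f g h.
- by rewrite sem_papp_add sem_add_papp Hadd.
- by rewrite sem_papp_mul_right sem_papp_mul_left Hass.
- by rewrite sem_papp_xy sem_papp_yx Hcom.
Qed.

End BACSpecial.

Section Unitization.
Variables (R : comNzRingType) (V : lmodType R) (mul : V -> V -> V).

Record nonunital_comalg : Prop := NonunitalComalg {
  mulC : commutative mul;
  mulA : associative mul;
  mulDl : left_distributive mul +%R;
  mulZl : forall c u v, mul (c *: u) v = c *: mul u v }.

Variable L : nonunital_comalg.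

Lemma mulDr : right_distributive mul +%R.
Proof. by move=> u v w; rewrite !(mulC L u) (mulDl L). Qed.

Lemma mulZr c u v : mul u (c *: v) = c *: mul u v.
Proof. by rewrite !(mulC L u) (mulZl L). Qed.

Lemma mul0l v : mul 0 v = 0.
Proof. by rewrite -(scale0r 0) (mulZl L) !scale0r. Qed.

(* [mmap] evaluates polynomials only in unital rings, hence R x V with
   (a, u) (b, v) = (a b, a v + b u + u v). *)
Definition unitization of nonunital_comalg := (R * V)%type.
Local Notation U := (unitization L).

HB.instance Definition _ := GRing.Zmodule.on U.

Definition unit_one : U := (1, 0).
Definition unit_mul (x y : U) : U :=
  (x.1 * y.1, x.1 *: y.2 + y.1 *: x.2 + mul x.2 y.2).

Lemma unit_mulA : associative unit_mul.
Proof.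
move=> [a u] [b v] [c w]; rewrite /unit_mul /=; congr (_, _); first by rewrite mulrA.
rewrite !(mulDl L) !mulDr !(mulZl L) !mulZr (mulA L) !scalerDr !scalerA.
rewrite (mulrC c a) (mulrC b c).
by rewrite !addrA [RHS](AC 7 (1*2*5*3*6*4*7)).
Qed.

Lemma unit_mulC : commutative unit_mul.
Proof.
move=> [a u] [b v]; rewrite /unit_mul /= mulrC (mulC L u).
by congr (_, _ + _); rewrite addrC.
Qed.

Lemma unit_mul1 : left_id unit_one unit_mul.
Proof.
by move=> [a u]; rewrite /unit_mul /= mul1r mul0l scale1r scaler0 !addr0.
Qed.

Lemma unit_mulDl : left_distributive unit_mul +%R.
Proof.
move=> [a u] [b v] [c w]; rewrite /unit_mul /= mulrDl (mulDl L) !scalerDl scalerDr.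
by congr (_, _); rewrite !addrA [LHS](AC 6 (1*3*5*2*4*6)).
Qed.

Lemma unit_one_neq0 : unit_one != 0.
Proof. by rewrite /unit_one xpair_eqE oner_eq0. Qed.

HB.instance Definition _ := GRing.Zmodule_isComNzRing.Build U
  unit_mulA unit_mulC unit_mul1 unit_mulDl unit_one_neq0.

Definition unit_scalar (c : R) : U := (c, 0).
Definition unit_vec (v : V) : U := (0, v).

Lemma unit_scalar_is_zmod_morphism : zmod_morphism unit_scalar.
Proof. by move=> a b; rewrite /unit_scalar; congr (_, _); rewrite subrr. Qed.

Lemma unit_scalar_is_monoid_morphism : monoid_morphism unit_scalar.
Proof.
by split=> // a b; rewrite /unit_scalar /GRing.mul /= /unit_mul /= mul0l !scaler0 !addr0.
Qed.

HB.instance Definition _ := GRing.isZmodMorphism.Build R U unit_scalar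
  unit_scalar_is_zmod_morphism.
HB.instance Definition _ := GRing.isMonoidMorphism.Build R U unit_scalar
  unit_scalar_is_monoid_morphism.

Lemma unit_vecD u v : unit_vec (u + v) = unit_vec u + unit_vec v.
Proof. by rewrite /unit_vec; congr (_, _); rewrite addr0. Qed.

Lemma unit_vecZ c v : unit_vec (c *: v) = unit_scalar c * unit_vec v.
Proof.
by rewrite /unit_vec /GRing.mul /= /unit_mul /= mulr0 scale0r mul0l !addr0.
Qed.

Lemma unit_vecM u v : unit_vec (mul u v) = unit_vec u * unit_vec v.
Proof. by rewrite /GRing.mul /= /unit_mul /= mulr0 !scale0r !add0r. Qed.

End Unitization.

Section Truncation.
Variables (S : finType) (n : nat).
Implicit Types f g : series S.

Fixpoint words_shorter (k : nat) : seq (seq S) :=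
  if k is k'.+1 then [::] :: [seq a :: w | a <- enum S, w <- words_shorter k']
  else [::].

Lemma mem_words_shorter k w : (w \in words_shorter k) = (size w < k)%N.
Proof.
elim: k w => [|k IH] [|a w] //=; rewrite in_cons //=.
apply/allpairsP/idP => [[[b v] /= [_ hv [_ ->]]]|hw]; first by rewrite ltnS -IH.
by exists (a, w); rewrite mem_enum IH.
Qed.

Definition trunc_space := {ffun seq_sub (words_shorter n) -> rat^o}.

Definition trunc f : trunc_space := [ffun x => f (ssval x)].
Definition untrunc (v : trunc_space) : series S :=
  fun w => if insub w is Some x then v x else 0.

Lemma truncK_upto f : eq_upto n (untrunc (trunc f)) f.
Proof.
move=> w hw; rewrite /untrunc.
by case: insubP => [x _ <-|]; rewrite ?ffunE // mem_words_shorter hw.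
Qed.

Lemma untruncK (v : trunc_space) : trunc (untrunc v) = v.
Proof. by apply/ffunP => x; rewrite ffunE /untrunc valK. Qed.

Lemma trunc_eq_upto f g : trunc f = trunc g <-> eq_upto n f g.
Proof.
split=> [E w hw|E].
  have hw' : w \in words_shorter n by rewrite mem_words_shorter.
  by have := congr1 (fun v : trunc_space => v (SeqSub hw')) E; rewrite !ffunE.
apply/ffunP => x; rewrite !ffunE; apply: E.
by rewrite -mem_words_shorter; apply: (valP x).
Qed.

Lemma trunc_add f g : trunc (sadd f g) = trunc f + trunc g.
Proof. by apply/ffunP => x; rewrite !ffunE. Qed.

Lemma trunc_scale c f : trunc (sscale c f) = c *: trunc f.
Proof. by apply/ffunP => x; rewrite !ffunE. Qed.

Lemma trunc_zero : trunc (@szero S) = 0.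
Proof. by apply/ffunP => x; rewrite !ffunE. Qed.

Lemma untrunc_add u v : untrunc (u + v) = sadd (untrunc u) (untrunc v).
Proof.
apply: functional_extensionality => w; rewrite /untrunc /sadd.
by case: insub => [x|]; rewrite ?ffunE ?addr0.
Qed.

Lemma untrunc_scale c v : untrunc (c *: v) = sscale c (untrunc v).
Proof.
apply: functional_extensionality => w; rewrite /untrunc /sscale.
by case: insub => [x|]; rewrite ?ffunE ?mulr0.
Qed.

End Truncation.

Section BACUpto.
Variables (S : finType) (P : prod_rule).
Implicit Types f g h : series S.

Definition bac_upto n :=
  [/\ forall f g h, eq_upto n (pprod P (sadd f g) h) (sadd (pprod P f h) (pprod P g h)),
      forall f g h, eq_upto n (pprod P f (pprod P g h)) (pprod P (pprod P f g) h)
    & forall f g, eq_upto n (pprod P f g) (pprod P g f)].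

Lemma pprod_scale_upto n :
  (forall f g h, eq_upto n (pprod P (sadd f g) h) (sadd (pprod P f h) (pprod P g h))) ->
  forall c f g, eq_upto n (pprod P (sscale c f) g) (sscale c (pprod P f g)).
Proof.
move=> Hadd c f g w hw.
pose phi (t : rat^o) : rat^o := pprod P (sscale t f) g w.
have phiD x y : phi (x + y) = phi x + phi y.
  rewrite -[RHS]/(sadd (pprod P (sscale x f) g) (pprod P (sscale y f) g) w).
  rewrite -Hadd //; congr (pprod P _ g w).
  by apply: functional_extensionality => v; rewrite /sadd /sscale mulrDl.
have phiB : zmod_morphism phi.
  by move=> x y; rewrite -{2}(subrK y x) (phiD (x - y)) addrK.
have := rat_linear phiB c 1; rewrite /phi /GRing.scale /= mulr1 => ->.
by congr (_ * pprod P _ g w); apply: functional_extensionality => v; rewrite /sscale mul1r.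
Qed.

End BACUpto.

Section TruncatedAlgebra.
Variables (S : finType) (P : prod_rule) (n : nat).
Hypothesis bacP : bac_upto S P n.
Local Notation trunc := (trunc n).

Definition trunc_mul (u v : trunc_space S n) : trunc_space S n :=
  trunc (pprod P (untrunc u) (untrunc v)).

Lemma trunc_pprod (f g : series S) : trunc (pprod P f g) = trunc_mul (trunc f) (trunc g).
Proof.
apply/trunc_eq_upto/pprod_eq_upto; apply: eq_upto_sym; exact: truncK_upto.
Qed.

Lemma trunc_mul_nonunital_comalg : nonunital_comalg trunc_mul.
Proof.
have [Hadd Hass Hcom] := bacP; split.
- by move=> u v; apply/trunc_eq_upto.
- move=> u v w; rewrite -[u]untruncK -[v]untruncK -[w]untruncK.
  by rewrite -!trunc_pprod; apply/trunc_eq_upto.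
- move=> u v w; rewrite /trunc_mul untrunc_add -trunc_add; exact/trunc_eq_upto.
- move=> c u v; rewrite /trunc_mul untrunc_scale -trunc_scale.
  exact/trunc_eq_upto/pprod_scale_upto.
Qed.

Local Notation vec := (unit_vec trunc_mul_nonunital_comalg).
Local Notation scalar := (unit_scalar trunc_mul_nonunital_comalg).

Lemma unit_vec_trunc_tsem k (rho : 'I_k -> series S) u :
  vec (trunc (tsem (pprod P) rho u)) =
  mmap scalar (fun i => vec (trunc (rho i))) (tpoly u).
Proof.
elim: u => /= [i||c u IH|u IHu v IHv|u IHu v IHv].
- by rewrite mmapX mmap1U.
- by rewrite mmap0 trunc_zero.
- by rewrite mmapZ -IH trunc_scale unit_vecZ.
- by rewrite mmapD -IHu -IHv trunc_add unit_vecD.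
- by rewrite rmorphM /= -IHu -IHv trunc_pprod unit_vecM.
Qed.

Lemma tsem_eq_upto_of_term_equiv k (rho : 'I_k -> series S) (u v : term 'I_k) :
  term_equiv u v -> eq_upto n (tsem (pprod P) rho u) (tsem (pprod P) rho v).
Proof.
move=> E; apply/trunc_eq_upto.
by have := unit_vec_trunc_tsem rho u; rewrite E -unit_vec_trunc_tsem => -[].
Qed.

End TruncatedAlgebra.

Section SpecialImpliesBAC.
Variables (S : finType) (P : prod_rule).
Hypothesis special_P : special P.

Lemma bac_uptoS n : bac_upto S P n -> bac_upto S P n.+1.
Proof.
have [E1 E2 E3] := special_P; move=> bacP; split.
- move=> f g h; apply: eq_uptoS => [|a]; first by rewrite !pprod_nil mulrDl.
  rewrite -sem_papp_add -sem_add_papp; exact: tsem_eq_upto_of_term_equiv E1.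
- move=> f g h; apply: eq_uptoS => [|a]; first by rewrite !pprod_nil mulrA.
  rewrite -sem_papp_mul_right -sem_papp_mul_left.
  exact: tsem_eq_upto_of_term_equiv E2.
- move=> f g; apply: eq_uptoS => [|a]; first by rewrite !pprod_nil mulrC.
  rewrite -(sem_papp_xy _ _ _ _ f) -(sem_papp_yx _ _ _ _ f).
  exact: tsem_eq_upto_of_term_equiv E3.
Qed.

Lemma bac_upto_all n : bac_upto S P n.
Proof. by elim: n => [|n]; [split | exact: bac_uptoS]. Qed.

Lemma special_bac : BAC (pprod (S := S) P).
Proof.
split; [|split; [|split]] => [f g h|c f g|f g h|f g];
  apply: functional_extensionality => w;
  have [Hadd Hass Hcom] := bac_upto_all (size w).+1.
- exact: Hadd.
- exact: pprod_scale_upto.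
- exact: Hass.
- exact: Hcom.
Qed.

End SpecialImpliesBAC.

Local Close Scope ring_scope.

Theorem theorem1 (S : finType) (P : prod_rule) (hS : 0 < #|S|) :
  BAC (pprod (S:=S) P) <-> special P.
Proof.
split; last exact: special_bac.
by case/card_gt0P: hS => a _; apply: bac_special.
Qed.
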